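(* Let $G$ be a group and let $S=\bigoplus_{g\in G}S_g$ be an epsilon-finitely $G$-graded ring. Then for every normal subgroup $N$ of $G$, the induced $G/N$-grading $\{S_C\}_{C\in G/N}$ is epsilon-finite (in particular epsilon-strong).
   Context: Rings are associative, not necessarily unital; $AB$ denotes finite sums of products. A grading $\{T_h\}_{h\in H}$ of a ring $T$ ($T=\bigoplus_hT_h$, $T_hT_k\subseteq T_{hk}$) is epsilon-strong if $T_hT_{h^{-1}}T_h=T_h$ for all $h$ and each ring $T_hT_{h^{-1}}$ has a multiplicative identity element $\epsilon_h$ (these are commuting idempotents). It is epsilon-finite if it is epsilon-strong and the set $\bigvee\{\epsilon_h\mid h\in H\}$ is finite, where for commuting idempotents $a\vee b=a+b-ab$ and $\bigvee F$ denotes the set of finite joins of elements of $F$. Induced grading: $S_C=\bigoplus_{g\in C}S_g$. *)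

(* the additive group of the ring is a zmodType; the
   (not necessarily unital) multiplication is an explicit binary operation. *)
From mathcomp Require Import all_boot all_algebra.
From Stdlib Require List.
Set Implicit Arguments. Unset Strict Implicit. Unset Printing Implicit Defensive.
Import GRing.Theory.
Local Open Scope ring_scope.

Section Defs.
Variable T : zmodType.
Variable mul : T -> T -> T.

Definition prodset (A B : T -> Prop) : T -> Prop :=
  fun x => exists l : seq (T * T),
    List.Forall (fun p => A p.1 /\ B p.2) l /\ x = \sum_(p <- l) mul p.1 p.2.

Definition set_eq (A B : T -> Prop) : Prop := forall x, A x <-> B x.

Definition is_identity_of (A : T -> Prop) (e : T) : Prop :=
  A e /\ forall x, A x -> mul e x = x /\ mul x e = x.

Definition cjoin (a b : T) : T := a + b - mul a b.

Inductive joins (E : T -> Prop) : T -> Prop :=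
| joins_base x : E x -> joins E x
| joins_join a b : joins E a -> joins E b -> joins E (cjoin a b).

Definition finite_set (A : T -> Prop) : Prop :=
  exists L : seq T, forall x, A x -> x \in L.

Variable H : Type.
Variable hmul : H -> H -> H.
Variable hinv : H -> H.
Variable Idx : H -> Prop.   (* the elements of the grading group *)
Variable S : H -> T -> Prop.

Definition is_grading : Prop :=
  (forall h, Idx h -> S h 0 /\ (forall x y, S h x -> S h y -> S h (x - y)))
  /\ (forall s, exists l : seq (H * T),
        List.Forall (fun p => Idx p.1 /\ S p.1 p.2) l /\ s = \sum_(p <- l) p.2)
  /\ (forall l : seq (H * T),
        List.Forall (fun p => Idx p.1 /\ S p.1 p.2) l ->
        List.NoDup (map fst l) ->
        \sum_(p <- l) p.2 = 0 -> List.Forall (fun p => p.2 = 0) l)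
  /\ (forall h k x y, Idx h -> Idx k -> S h x -> S k y -> S (hmul h k) (mul x y)).

Definition epsilon_strong : Prop :=
  is_grading /\
  forall h, Idx h ->
    set_eq (prodset (prodset (S h) (S (hinv h))) (S h)) (S h) /\
    exists e, is_identity_of (prodset (S h) (S (hinv h))) e.

Definition epsilons : T -> Prop :=
  fun e => exists h, Idx h /\ is_identity_of (prodset (S h) (S (hinv h))) e.

Definition epsilon_finite : Prop :=
  epsilon_strong /\ finite_set (joins epsilons).

End Defs.

Section Groups.
Variable G : Type.
Variable gmul : G -> G -> G.
Variable ginv : G -> G.
Variable g1 : G.

Definition is_group : Prop :=
  (forall a b c, gmul a (gmul b c) = gmul (gmul a b) c) /\
  (forall a, gmul g1 a = a /\ gmul a g1 = a) /\
  (forall a, gmul (ginv a) a = g1 /\ gmul a (ginv a) = g1).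

Definition normal_subgroup (N : G -> Prop) : Prop :=
  N g1 /\ (forall a b, N a -> N b -> N (gmul a b)) /\ (forall a, N a -> N (ginv a))
  /\ (forall a g, N a -> N (gmul (gmul g a) (ginv g))).

(* G/N: cosets gN, viewed as subsets of G *)
Definition is_coset (N : G -> Prop) (C : G -> Prop) : Prop :=
  exists g, C = (fun x => N (gmul (ginv g) x)).

Definition setmul (C D : G -> Prop) : G -> Prop :=
  fun x => exists a b, C a /\ D b /\ x = gmul a b.

Definition setinv (C : G -> Prop) : G -> Prop := fun x => C (ginv x).
End Groups.

Definition induced {T : zmodType} {G : Type} (S : G -> T -> Prop)
  (C : G -> Prop) : T -> Prop :=
  fun s => exists l : seq (G * T),
    List.Forall (fun p => C p.1 /\ S p.1 p.2) l /\ s = \sum_(p <- l) p.2.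

Definition is_ring_mul {T : zmodType} (mul : T -> T -> T) : Prop :=
  (forall a b c, mul a (mul b c) = mul (mul a b) c) /\
  (forall a b c, mul (a + b) c = mul a c + mul b c) /\
  (forall a b c, mul a (b + c) = mul a b + mul a c).

(* Terms of distinct
   degrees are independent and distinct cosets are disjoint, so the S_C form a
   grading by the cosets, and S_C S_C^-1 S_C = S_C follows from the same
   identity for each S_g.  The epsilons e_g are commuting idempotents of S_1,
   ordered by e <= f iff f e = e, and the join of two of them bounds both.  As
   the joins of epsilons form a finite set, the joins of the e_g with g in C have
   a largest element e_C; it lies in S_C S_C^-1, fixes each S_g (g in C) from
   the left and each S_g^-1 from the right, and so is the identity of
   S_C S_C^-1.  Thus every epsilon of the induced grading is a join of epsilons
   of the original one, and there are finitely many of those. *)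

From HB Require Import structures.
From mathcomp Require Import all_boot all_algebra.
From mathcomp Require Import boolp.
From Stdlib Require List.
Set Implicit Arguments. Unset Strict Implicit. Unset Printing Implicit Defensive.
Import GRing.Theory.
Local Open Scope ring_scope.

Lemma inP (I : eqType) (x : I) (s : seq I) : reflect (List.In x s) (x \in s).
Proof.
elim: s => [|y s IH] /=; first by constructor.
by rewrite in_cons; apply: (iffP orP) => [[/eqP ->|/IH]|[->|/IH]]; [left|right|left|right].
Qed.

Lemma ForallP (I : eqType) (P : I -> Prop) (s : seq I) :
  List.Forall P s <-> {in s, forall x, P x}.
Proof. by rewrite List.Forall_forall; split=> PS x /inP; apply: PS. Qed.

Lemma NoDup_uniq (I : eqType) (s : seq I) : List.NoDup s <-> uniq s.
Proof.
elim: s => [|x s IH] /=; first by split=> // _; constructor.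
by rewrite List.NoDup_cons_iff IH; split=> [[/inP -> ->]|/andP[/inP ? ?]].
Qed.

Lemma big_partition_fst (I : eqType) (V : nmodType) (l : seq (I * V)) (P : pred I) :
  \sum_(q <- l | P q.1) q.2 =
  \sum_(i <- undup (map fst l) | P i) \sum_(q <- l | q.1 == i) q.2.
Proof.
rewrite [RHS](exchange_big_dep (fun q : I * V => P q.1)) /=; last first.
  by move=> i q Pi /eqP e; rewrite /= e.
rewrite big_seq_cond [RHS]big_seq_cond; apply: eq_bigr => q /andP[lq Pq].
rewrite -big_filter (@eq_filter _ _ (pred1 q.1)) => [|i /=]; last first.
  by rewrite eq_sym andb_idl // => /eqP ->.
by rewrite filter_pred1_uniq ?undup_uniq ?mem_undup ?map_f // big_seq1.
Qed.

Lemma big_fst_uniq (I : eqType) (V : nmodType) (l : seq (I * V)) p :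
  uniq (map fst l) -> p \in l -> \sum_(q <- l | q.1 == p.1) q.2 = p.2.
Proof.
elim: l => // q l IH /= /andP[ql ul]; rewrite in_cons big_cons.
case/orP => [/eqP ->|pl].
  rewrite eqxx big1_seq ?addr0 // => q' /andP[/eqP e lq'].
  by case/negP: ql; rewrite -e map_f.
rewrite IH //; case: eqP => // e.
by case/negP: ql; rewrite e map_f.
Qed.

Section FiniteSums.
Variable T : zmodType.

(* [prodset mul A B] and [induced S C] unfold to instances of [sums], so the
   lemmas of this section apply to both. *)
Definition sums (I : Type) (R : I -> Prop) (F : I -> T) : T -> Prop :=
  fun x => exists l : seq I, List.Forall R l /\ x = \sum_(i <- l) F i.

Variables (I : Type) (R : I -> Prop) (F : I -> T).

Lemma sums_ind (P : T -> Prop) :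
  P 0 -> (forall x y, P x -> P y -> P (x + y)) -> (forall i, R i -> P (F i)) ->
  forall x, sums R F x -> P x.
Proof.
move=> P0 PD PF _ [l [Rl ->]]; elim: Rl => [|i l' Ri _ IH]; first by rewrite big_nil.
by rewrite big_cons; apply: PD => //; apply: PF.
Qed.

Lemma sums0 : sums R F 0.
Proof. by exists [::]; rewrite big_nil. Qed.

Lemma sumsD x y : sums R F x -> sums R F y -> sums R F (x + y).
Proof.
move=> [l [Rl ->]] [l' [Rl' ->]]; exists (l ++ l').
by rewrite big_cat; split=> //; apply/List.Forall_app.
Qed.

End FiniteSums.

Section NonunitalRing.
Variables (T : zmodType) (mul : T -> T -> T).
Hypothesis mulT : is_ring_mul mul.

Lemma mulA a b c : mul a (mul b c) = mul (mul a b) c.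
Proof. by case: mulT. Qed.

Lemma mulDl a b c : mul (a + b) c = mul a c + mul b c.
Proof. by case: mulT => _ []. Qed.

Lemma mulDr a b c : mul a (b + c) = mul a b + mul a c.
Proof. by case: mulT => _ []. Qed.

Lemma mulBl a b c : mul (a - b) c = mul a c - mul b c.
Proof. by apply/eqP; rewrite eq_sym subr_eq -mulDl subrK. Qed.

Lemma mulBr a b c : mul a (b - c) = mul a b - mul a c.
Proof. by apply/eqP; rewrite eq_sym subr_eq -mulDr subrK. Qed.

Lemma mul0l a : mul 0 a = 0.
Proof. by rewrite -{1}(subrr a) mulBl subrr. Qed.

Lemma mul0r a : mul a 0 = 0.
Proof. by rewrite -{1}(subrr a) mulBr subrr. Qed.

Lemma mulNl a b : mul (- a) b = - mul a b.
Proof. by rewrite -sub0r mulBl mul0l sub0r. Qed.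

Lemma prodset_gen (A B : T -> Prop) a b : A a -> B b -> prodset mul A B (mul a b).
Proof. by move=> Aa Bb; exists [:: (a, b)]; rewrite big_seq1; split=> //; constructor. Qed.

Lemma prodset_sub (A B A' B' : T -> Prop) x :
  (forall a, A a -> A' a) -> (forall b, B b -> B' b) ->
  prodset mul A B x -> prodset mul A' B' x.
Proof.
move=> AA' BB'; apply: sums_ind => [|y z|[a b] [Aa Bb] /=]; first exact: sums0.
  exact: sumsD.
by apply: prodset_gen; [apply: AA'|apply: BB'].
Qed.

Lemma prodsetN (A B : T -> Prop) x :
  (forall a, A a -> A (- a)) -> prodset mul A B x -> prodset mul A B (- x).
Proof.
move=> AN; move: x; apply: sums_ind => [|y z Py Pz|[a b] [Aa Bb]].
- by rewrite oppr0; apply: sums0.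
- by rewrite opprD; apply: sumsD.
by rewrite /= -mulNl; apply: prodset_gen => //; apply: AN.
Qed.

Lemma prodset_mull (A B : T -> Prop) c x :
  (forall a, A a -> A (mul c a)) -> prodset mul A B x -> prodset mul A B (mul c x).
Proof.
move=> Ac; move: x; apply: sums_ind => [|y z Py Pz|[a b] [Aa Bb]].
- by rewrite mul0r; apply: sums0.
- by rewrite mulDr; apply: sumsD.
by rewrite /= mulA; apply: prodset_gen => //; apply: Ac.
Qed.

Lemma prodset_mulr (A B : T -> Prop) c x :
  (forall b, B b -> B (mul b c)) -> prodset mul A B x -> prodset mul A B (mul x c).
Proof.
move=> Bc; move: x; apply: sums_ind => [|y z Py Pz|[a b] [Aa Bb]].
- by rewrite mul0l; apply: sums0.
- by rewrite mulDl; apply: sumsD.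
by rewrite /= -mulA; apply: prodset_gen => //; apply: Bc.
Qed.

Lemma prodset_idl (A B : T -> Prop) e x :
  (forall a, A a -> mul e a = a) -> prodset mul A B x -> mul e x = x.
Proof.
move=> eA; move: x; apply: sums_ind => [|y z ey ez|[a b] [Aa _]]; first exact: mul0r.
  by rewrite mulDr ey ez.
by rewrite /= mulA eA.
Qed.

Lemma prodset_idr (A B : T -> Prop) e x :
  (forall b, B b -> mul b e = b) -> prodset mul A B x -> mul x e = x.
Proof.
move=> eB; move: x; apply: sums_ind => [|y z ye ze|[a b] [_ Bb]]; first exact: mul0l.
  by rewrite mulDl ye ze.
by rewrite /= -mulA eB.
Qed.

Lemma prodsetA (A B C : T -> Prop) x :
  prodset mul (prodset mul A B) C x -> prodset mul A (prodset mul B C) x.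
Proof.
move: x; apply: sums_ind => [|y z|[y c] []]; [exact: sums0|exact: sumsD|].
move=> /= ABy Cc; move: y ABy.
apply: sums_ind => [|y z Py Pz|[a b] [Aa Bb]] /=; first by rewrite mul0l; apply: sums0.
  by rewrite mulDl; apply: sumsD.
by rewrite -mulA; apply: prodset_gen => //; apply: prodset_gen.
Qed.

Lemma identity_uniq A e e' : is_identity_of mul A e -> is_identity_of mul A e' -> e = e'.
Proof. by move=> [Ae eA] [Ae' e'A]; rewrite -(eA _ Ae').1 (e'A _ Ae).2. Qed.

End NonunitalRing.

Lemma joins_sub (T : zmodType) (mul : T -> T -> T) (E E' : T -> Prop) x :
  (forall y, E y -> E' y) -> joins mul E x -> joins mul E' x.
Proof. by move=> EE'; elim=> [y /EE' /joins_base|a b _ ja _ jb] //; apply: joins_join. Qed.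

Lemma joins_joins (T : zmodType) (mul : T -> T -> T) (E : T -> Prop) x :
  joins mul (joins mul E) x -> joins mul E x.
Proof. by elim=> // a b _ ja _ jb; apply: joins_join. Qed.

Section CentralIdempotents.
Variables (T : zmodType) (mul : T -> T -> T).
Hypothesis mulT : is_ring_mul mul.
Variable A : T -> Prop.
Hypotheses (A_add : forall x y, A x -> A y -> A (x + y))
           (A_opp : forall x, A x -> A (- x))
           (A_mul : forall x y, A x -> A y -> A (mul x y)).

Definition central_idem (x : T) : Prop :=
  [/\ A x, mul x x = x & forall a, A a -> mul x a = mul a x].

Definition idem_le (x y : T) : Prop := mul y x = x.

Lemma idem_le_trans x y z : idem_le x y -> idem_le y z -> idem_le x z.
Proof. by rewrite /idem_le => xy yz; rewrite -xy (mulA mulT) yz. Qed.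

Lemma idem_le_cjoinl a b : central_idem a -> central_idem b -> idem_le a (cjoin mul a b).
Proof.
move=> [Aa aa _] [_ _ bA]; rewrite /idem_le /cjoin (mulBl mulT) (mulDl mulT) aa.
by rewrite -(bA a) // -(mulA mulT) aa addrK.
Qed.

Lemma idem_le_cjoinr a b : central_idem b -> idem_le b (cjoin mul a b).
Proof.
move=> [_ bb _]; rewrite /idem_le /cjoin (mulBl mulT) (mulDl mulT) bb -(mulA mulT) bb.
by rewrite addrAC subrr add0r.
Qed.

Lemma central_idem_cjoin a b :
  central_idem a -> central_idem b -> central_idem (cjoin mul a b).
Proof.
move=> ca cb; have [Aa _ aA] := ca; have [Ab _ bA] := cb.
have ja := idem_le_cjoinl ca cb; have jb := idem_le_cjoinr a cb.
split.
- by apply: A_add; [apply: A_add|apply: A_opp; apply: A_mul].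
- by rewrite {2}/cjoin (mulBr mulT) (mulDr mulT) ja jb (mulA mulT) ja.
- move=> x Ax; rewrite /cjoin (mulBl mulT) (mulDl mulT) (mulBr mulT) (mulDr mulT) aA // bA //.
  by rewrite -(mulA mulT) bA // (mulA mulT) aA // -(mulA mulT).
Qed.

Lemma joins_central_idem (E : T -> Prop) x :
  (forall y, E y -> central_idem y) -> joins mul E x -> central_idem x.
Proof. by move=> EA; elim=> [y /EA|a b _ ca _ cb] //; apply: central_idem_cjoin. Qed.

Lemma joins_max (E : T -> Prop) :
  (forall y, E y -> central_idem y) -> finite_set (joins mul E) -> (exists x, E x) ->
  exists2 m, joins mul E m & forall y, joins mul E y -> idem_le y m.
Proof.
move=> EA [L finL] [x Ex].
suff [m Em mL] : exists2 m, joins mul E m & {in L, forall y, joins mul E y -> idem_le y m}.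
  by exists m => // y Ey; apply: mL => //; apply: finL.
elim: L {finL} => [|y L [m Em mL]]; first by exists x => //; apply: joins_base.
have [Ey|nEy] := pselect (joins mul E y); last first.
  by exists m => // z; rewrite in_cons => /predU1P [->|/mL].
have [cy cm] := (joins_central_idem EA Ey, joins_central_idem EA Em).
exists (cjoin mul y m); first exact: joins_join.
move=> z; rewrite in_cons => /predU1P [-> _|/mL zm /zm]; first exact: idem_le_cjoinl.
by move/idem_le_trans; apply; apply: idem_le_cjoinr.
Qed.

End CentralIdempotents.

Section Group.
Variables (G : Type) (gmul : G -> G -> G) (ginv : G -> G) (g1 : G).
Hypothesis groupG : is_group gmul ginv g1.
Local Notation "a * b" := (gmul a b).

Lemma gmulA a b c : a * (b * c) = (a * b) * c.
Proof. by case: groupG. Qed.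

Lemma gmul1l a : g1 * a = a.
Proof. by case: groupG => _ [/(_ a) []]. Qed.

Lemma gmul1r a : a * g1 = a.
Proof. by case: groupG => _ [/(_ a) []]. Qed.

Lemma gmulVl a : ginv a * a = g1.
Proof. by case: groupG => _ [_ /(_ a) []]. Qed.

Lemma gmulVr a : a * ginv a = g1.
Proof. by case: groupG => _ [_ /(_ a) []]. Qed.

Lemma ginv_unique a b : a * b = g1 -> a = ginv b.
Proof. by move=> ab; rewrite -[a]gmul1r -(gmulVr b) gmulA ab gmul1l. Qed.

Lemma ginvK a : ginv (ginv a) = a.
Proof. by symmetry; apply: ginv_unique; rewrite gmulVr. Qed.

Lemma ginvM a b : ginv (a * b) = ginv b * ginv a.
Proof. by symmetry; apply: ginv_unique; rewrite -gmulA (gmulA (ginv a)) gmulVl gmul1l gmulVl. Qed.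

Lemma gmulKV a b c : (a * b) * (ginv b * c) = a * c.
Proof. by rewrite -gmulA (gmulA b) gmulVr gmul1l. Qed.

Definition subgroup (N : G -> Prop) : Prop :=
  [/\ N g1, forall a b, N a -> N b -> N (a * b) & forall a, N a -> N (ginv a)].

Lemma normal_subgroupW N : normal_subgroup gmul ginv g1 N -> subgroup N.
Proof. by case=> N1 [NM [NV _]]. Qed.

Definition lcoset (N : G -> Prop) (g : G) : G -> Prop := fun x => N (ginv g * x).

Variable N : G -> Prop.
Hypothesis subN : subgroup N.

Lemma lcoset_refl g : lcoset N g g.
Proof. by case: subN; rewrite /lcoset gmulVl. Qed.

Lemma lcoset_eq g g' x : lcoset N g x -> lcoset N g' x -> lcoset N g = lcoset N g'.
Proof.
have [_ NM NV] := subN.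
have sub u v : lcoset N u x -> lcoset N v x -> forall y, lcoset N v y -> lcoset N u y.
  move=> ux vx y vy; have uv : N (ginv u * v).
    by have := NM _ _ ux (NV _ vx); rewrite ginvM ginvK gmulKV.
  by have := NM _ _ uv vy; rewrite gmulKV.
by move=> gx g'x; rewrite predeqE => y; split; apply: sub.
Qed.

Lemma coset_eq C D x : is_coset gmul ginv N C -> is_coset gmul ginv N D -> C x -> D x -> C = D.
Proof. by move=> [g ->] [g' ->]; apply: lcoset_eq. Qed.

Lemma coset_mulVM C a b c : is_coset gmul ginv N C ->
  C a -> setinv ginv C b -> C c -> C ((a * b) * c).
Proof.
have [_ NM NV] := subN; move=> [g ->]; rewrite /setinv /lcoset => ga gb gc.
by have := NM _ _ (NM _ _ ga (NV _ gb)) gc; rewrite ginvM !ginvK (gmulA _ b) gmulKV !gmulA.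
Qed.

End Group.

Section Grading.
Variables (G : Type) (gmul : G -> G -> G) (ginv : G -> G) (g1 : G).
Hypothesis groupG : is_group gmul ginv g1.
Variables (T : zmodType) (mul : T -> T -> T).
Hypothesis mulT : is_ring_mul mul.
Variable S : G -> T -> Prop.
Hypothesis gradS : is_grading mul gmul (fun _ => True) S.

(* Classical decidable equality on G, used to collect homogeneous terms by degree. *)
HB.instance Definition _ := gen_eqMixin G.

Lemma homog0 g : S g 0.
Proof. by case: gradS => /(_ g I) []. Qed.

Lemma homogB g x y : S g x -> S g y -> S g (x - y).
Proof. by case: gradS => /(_ g I) [_ SB] _; apply: SB. Qed.

Lemma homogN g x : S g x -> S g (- x).
Proof. by rewrite -sub0r; apply: homogB (homog0 g). Qed.

Lemma homogD g x y : S g x -> S g y -> S g (x + y).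
Proof. by move=> Sx Sy; rewrite -[y]opprK; apply: homogB (homogN Sy). Qed.

Lemma homogM g h x y : S g x -> S h y -> S (gmul g h) (mul x y).
Proof. by case: gradS => _ [_ [_ SM]]; apply: SM. Qed.

Lemma homog1M x y : S g1 x -> S g1 y -> S g1 (mul x y).
Proof. by rewrite -{3}(gmul1l groupG g1); apply: homogM. Qed.

Lemma homog_sum_eq0 (L : seq (G * T)) (P : pred G) :
  List.Forall (fun q => S q.1 q.2) L -> \sum_(q <- L) q.2 = 0 ->
  \sum_(q <- L | P q.1) q.2 = 0.
Proof.
move=> /ForallP homL sumL0.
pose comp g := \sum_(q <- L | q.1 == g) q.2.
(* M merges the terms of L of equal degree, so that independence applies to it. *)
pose M := [seq (g, comp g) | g <- undup (map fst L)].
have compS g : S g (comp g).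
  rewrite /comp big_seq_cond; apply: big_ind => [|x y|q /andP[/homL Sq /eqP <-]] //.
    exact: homog0.
  exact: homogD.
have fstM : map fst M = undup (map fst L) by rewrite /M; elim: (undup _) => //= g r ->.
have /ForallP compM : List.Forall (fun p => p.2 = 0) M.
  case: gradS => _ [_ [indep _]]; apply: indep.
  - by apply/ForallP => _ /mapP[g _ ->].
  - by rewrite fstM; apply/NoDup_uniq/undup_uniq.
  - by rewrite big_map -[RHS]sumL0 (big_partition_fst L xpredT).
rewrite (big_partition_fst L P) big1_seq // => g /andP[_ gL].
by apply: (compM (g, comp g)); apply: map_f.
Qed.

Lemma induced_gen C g s : C g -> S g s -> induced S C s.
Proof. by move=> Cg Ss; exists [:: (g, s)]; rewrite big_seq1; split=> //; constructor. Qed.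

Lemma inducedN C x : induced S C x -> induced S C (- x).
Proof.
move: x; apply: sums_ind => [|x y Px Py|[g s] [Cg Ss]]; first by rewrite oppr0; apply: sums0.
  by rewrite opprD; apply: sumsD.
by apply: (induced_gen Cg); apply: homogN.
Qed.

Lemma induced_sub (C D : G -> Prop) x : (forall g, C g -> D g) -> induced S C x -> induced S D x.
Proof.
move=> CD; apply: sums_ind => [|y z|[g s] [Cg Ss]]; [exact: sums0|exact: sumsD|].
exact: (induced_gen (CD g Cg)).
Qed.

Lemma induced_mul C D x y :
  induced S C x -> induced S D y -> induced S (setmul gmul C D) (mul x y).
Proof.
move=> Cx Dy; move: x Cx; apply: sums_ind => [|x x' Px Px'|[g s] [Cg Ss] /=].
- by rewrite (mul0l mulT); apply: sums0.
- by rewrite (mulDl mulT); apply: sumsD.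
move: y Dy; apply: sums_ind => [|y y' Py Py'|[h t] [Dh St] /=].
- by rewrite (mul0r mulT); apply: sums0.
- by rewrite (mulDr mulT); apply: sumsD.
by apply: (induced_gen (g := gmul g h)); [exists g, h|apply: homogM].
Qed.

Lemma induced_mul1l C a x : S g1 a -> induced S C x -> induced S C (mul a x).
Proof.
move=> Sa; move: x; apply: sums_ind => [|x y Px Py|[g s] [Cg Ss] /=].
- by rewrite (mul0r mulT); apply: sums0.
- by rewrite (mulDr mulT); apply: sumsD.
by apply: (induced_gen Cg); rewrite -(gmul1l groupG g); apply: homogM.
Qed.

Section CosetGrading.
Variable N : G -> Prop.
Hypothesis subN : subgroup gmul ginv g1 N.
Local Notation is_coset := (is_coset gmul ginv N).

Lemma induced_coset_sum (l : seq ((G -> Prop) * T)) C :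
  List.Forall (fun p => is_coset p.1 /\ induced S p.1 p.2) l -> is_coset C ->
  exists L : seq (G * T), [/\ List.Forall (fun q => S q.1 q.2) L,
    \sum_(q <- L) q.2 = \sum_(p <- l) p.2 &
    \sum_(q <- L | `[< C q.1 >]) q.2 = \sum_(p <- l | p.1 == C) p.2].
Proof.
move=> cosl cosC; elim: cosl => [|[D x] l' [cosD [Lx [/ForallP DLx /= ->]]] _ [L [SL sumL sumLC]]].
  by exists [::]; rewrite !big_nil.
exists (Lx ++ L); split.
- apply/List.Forall_app; split=> //.
  by apply/ForallP => q /DLx [].
- by rewrite big_cat big_cons sumL.
rewrite big_cat big_cons /= sumLC big_seq_cond; case: eqP => [<-|DC].
  congr (_ + _); rewrite [RHS]big_seq_cond; apply: eq_bigl => q.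
  by case: (boolP (q \in Lx)) => // /DLx [Dq _]; apply/asboolP.
rewrite big_pred0 ?add0r // => q; apply/andP => -[/DLx [Dq _] /asboolP Cq].
by case: DC; apply: (coset_eq groupG subN cosD cosC Dq Cq).
Qed.

Lemma induced_coset_indep (l : seq ((G -> Prop) * T)) :
  List.Forall (fun p => is_coset p.1 /\ induced S p.1 p.2) l ->
  List.NoDup (map fst l) -> \sum_(p <- l) p.2 = 0 -> List.Forall (fun p => p.2 = 0) l.
Proof.
move=> cosl /NoDup_uniq ul suml0; apply/ForallP => p pl.
have /ForallP/(_ p pl) [cosp _] := cosl.
have [L [SL sumL sumLp]] := induced_coset_sum cosl cosp.
rewrite -(big_fst_uniq ul pl) -sumLp.
exact: homog_sum_eq0 (fun g => `[< p.1 g >]) SL (etrans sumL suml0).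
Qed.

Lemma induced_grading :
  is_grading mul (setmul gmul) is_coset (induced S).
Proof.
split; [|split; [|split]].
- move=> C _; split; first exact: sums0.
  by move=> x y Cx Cy; apply: sumsD => //; apply: inducedN.
- have [_ [decS _]] := gradS; move=> s; move: s (decS s).
  apply: sums_ind => [|x y|[g s'] [_ Ss'] /=]; [exact: sums0|exact: sumsD|].
  exists [:: (lcoset gmul ginv N g, s')]; rewrite big_seq1; split=> //; constructor=> //.
  split; first by exists g.
  by apply: (induced_gen (g := g)) => //; apply: (lcoset_refl groupG subN).
- exact: induced_coset_indep.
- by move=> C D x y _ _; apply: induced_mul.
Qed.

End CosetGrading.

Section EpsilonStrong.
Hypothesis strongS :
  forall h, set_eq (prodset mul (prodset mul (S h) (S (ginv h))) (S h)) (S h).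
Local Notation SSinv h := (prodset mul (S h) (S (ginv h))).

Lemma SSinv_homog1 h x : SSinv h x -> S g1 x.
Proof.
move: x; apply: sums_ind => [|x y|[a b] [Sa Sb] /=]; [exact: homog0|exact: homogD|].
by rewrite -(gmulVr groupG h); apply: homogM.
Qed.

Lemma epsilon_central_idem h e :
  is_identity_of mul (SSinv h) e -> central_idem mul (S g1) e.
Proof.
move=> [SSe eSS]; split; first exact: SSinv_homog1 SSe.
  by case: (eSS e SSe).
move=> a Sa.
have SSae : SSinv h (mul a e).
  by apply: (prodset_mull mulT) => // x Sx; rewrite -(gmul1l groupG h); apply: homogM.
have SSea : SSinv h (mul e a).
  by apply: (prodset_mulr mulT) => // y Sy; rewrite -(gmul1r groupG (ginv h)); apply: homogM.
by rewrite -(eSS _ SSea).2 -(mulA mulT) (eSS _ SSae).1.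
Qed.

Lemma epsilon_mull h e s : is_identity_of mul (SSinv h) e -> S h s -> mul e s = s.
Proof. by move=> [_ eSS] /(strongS h s).2; apply: (prodset_idl mulT) => a /eSS []. Qed.

Lemma epsilon_mulr h e s : is_identity_of mul (SSinv (ginv h)) e -> S h s -> mul s e = s.
Proof.
move=> [_ eSS] /(strongS h s).2 /(prodsetA mulT); apply: (prodset_idr mulT) => y.
by rewrite -{2}(ginvK groupG h) => /eSS [].
Qed.

Lemma joins_epsilons_central_idem (Idx : G -> Prop) x :
  joins mul (epsilons mul ginv Idx S) x -> central_idem mul (S g1) x.
Proof.
apply: (joins_central_idem mulT (@homogD g1) (@homogN g1) homog1M).
by move=> e [h [_ /epsilon_central_idem]].
Qed.

Lemma induced_coset_strong N C : subgroup gmul ginv g1 N -> is_coset gmul ginv N C ->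
  set_eq (prodset mul (prodset mul (induced S C) (induced S (setinv ginv C))) (induced S C))
         (induced S C).
Proof.
move=> subN cosC x; split.
  move: x; apply: sums_ind => [|x y|[y c] []]; [exact: sums0|exact: sumsD|].
  move=> /= Jy Cc; have /induced_mul/(_ Cc) : induced S (setmul gmul C (setinv ginv C)) y.
    move: y Jy; apply: sums_ind => [|y z|[a b] [Ca Cb] /=]; [exact: sums0|exact: sumsD|].
    exact: induced_mul.
  apply: induced_sub => _ [_ [c' [[a [b [Ca [Cb ->]]]] [Cc' ->]]]].
  exact: (coset_mulVM groupG subN).
move: x; apply: sums_ind => [|x y|[g s] [Cg Ss] /=]; [exact: sums0|exact: sumsD|].
have := (strongS g s).2 Ss; apply: prodset_sub => [x|y Sy]; last exact: (induced_gen Cg).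
apply: prodset_sub => y Sy; first exact: (induced_gen Cg).
by apply: (induced_gen (g := ginv g)) => //; rewrite /setinv (ginvK groupG).
Qed.

Section CosetEpsilons.
Hypothesis idS : forall h, exists e, is_identity_of mul (SSinv h) e.
Variable C : G -> Prop.
Local Notation SC := (induced S C).
Local Notation SCinv := (induced S (setinv ginv C)).
Local Notation epsC := (epsilons mul ginv C S).

Lemma joins_epsilons_prodset x : joins mul epsC x -> prodset mul SC SCinv x.
Proof.
elim=> [e [g [Cg [SSe _]]]|a b ja Ja _ Jb].
  apply: prodset_sub SSe => y Sy; first exact: (induced_gen Cg).
  by apply: (induced_gen (g := ginv g)) => //; rewrite /setinv (ginvK groupG).
have [Sa _ _] := joins_epsilons_central_idem ja.
rewrite /cjoin; apply: sumsD; first exact: sumsD.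
apply: (prodsetN mulT) => [y|]; first exact: inducedN.
by apply: (prodset_mull mulT) => // y; apply: induced_mul1l.
Qed.

Lemma max_epsilon_identity m : joins mul epsC m -> (forall e, epsC e -> idem_le mul e m) ->
  is_identity_of mul (prodset mul SC SCinv) m.
Proof.
move=> jm mmax; have [Sm _ mS] := joins_epsilons_central_idem jm.
have mSC s : SC s -> mul m s = s.
  move: s; apply: sums_ind => [|x y mx my|[g s] []]; first exact: (mul0r mulT).
    by rewrite (mulDr mulT) mx my.
  move=> /= Cg Ss; have [e eg] := idS g.
  by rewrite -(epsilon_mull eg Ss) (mulA mulT) (mmax e) //; exists g.
have SCm t : SCinv t -> mul t m = t.
  move: t; apply: sums_ind => [|x y xm ym|[h t] []]; first exact: (mul0l mulT).
    by rewrite (mulDl mulT) xm ym.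
  move=> /= Ch St; have [e eh] := idS (ginv h); have [Se _ _] := epsilon_central_idem eh.
  by rewrite -(epsilon_mulr eh St) -(mulA mulT) -mS // (mmax e) //; exists (ginv h).
split; first exact: joins_epsilons_prodset.
by move=> x Jx; split; [apply: (prodset_idl mulT) Jx|apply: (prodset_idr mulT) Jx].
Qed.

Lemma epsilon_identity_exists :
  finite_set (joins mul (epsilons mul ginv (fun _ => True) S)) -> (exists g, C g) ->
  exists2 m, joins mul epsC m & is_identity_of mul (prodset mul SC SCinv) m.
Proof.
move=> [L finL] [g Cg].
have [m jm mmax] : exists2 m, joins mul epsC m & forall e, joins mul epsC e -> idem_le mul e m.
  apply: (joins_max mulT (@homogD g1) (@homogN g1) homog1M).
  - by move=> e [h [_ /epsilon_central_idem]].
  - by exists L => x jx; apply: finL; apply: joins_sub jx => e [h [_ he]]; exists h.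
  - by have [e eg] := idS g; exists e, g.
exists m => //; apply: max_epsilon_identity => // e ee.
by apply: mmax; apply: joins_base.
Qed.

Lemma coset_epsilon_identity N :
  finite_set (joins mul (epsilons mul ginv (fun _ => True) S)) ->
  subgroup gmul ginv g1 N -> is_coset gmul ginv N C ->
  exists2 m, joins mul epsC m & is_identity_of mul (prodset mul SC SCinv) m.
Proof.
move=> finS subN [g defC]; apply: epsilon_identity_exists => //.
by exists g; rewrite defC; apply: (lcoset_refl groupG subN).
Qed.

End CosetEpsilons.
End EpsilonStrong.
End Grading.

Theorem proposition6p3 (G : Type) (gmul : G -> G -> G) (ginv : G -> G) (g1 : G)
  (HG : is_group gmul ginv g1)
  (T : zmodType) (mul : T -> T -> T) (Hmul : is_ring_mul mul)
  (S : G -> T -> Prop)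
  (HS : epsilon_finite mul gmul ginv (fun _ => True) S) :
  forall N : G -> Prop, normal_subgroup gmul ginv g1 N ->
    epsilon_finite mul (setmul gmul) (setinv ginv) (is_coset gmul ginv N)
      (induced S).
Proof.
move=> N normalN; have subN := normal_subgroupW normalN.
case: HS => [[gradS strongidS] finS].
have strongS h := (strongidS h I).1; have idS h := (strongidS h I).2.
have identity C := coset_epsilon_identity HG Hmul gradS strongS idS finS subN (C := C).
split; first split.
- exact: (induced_grading HG Hmul gradS subN).
- move=> C cosC; split; first exact: (induced_coset_strong HG Hmul gradS strongS subN).
  by have [m _ im] := identity C cosC; exists m.
have [L finL] := finS; exists L => x jx; apply: finL; apply: joins_joins.
apply: joins_sub jx => e [C [cosC ie]].
have [m jm im] := identity C cosC; rewrite (identity_uniq ie im).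
by apply: joins_sub jm => e' [g [_ ge']]; exists g.
Qed.
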